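(* Define binary words by $a_0=0$, $b_0=1$, $a_{n+1}=a_nb_n$, $b_{n+1}=b_na_n$ (so $|a_n|=2^n$). For every integer $u>0$ and every $n$ with $u\le |a_n|/4$, among the positions $i\in\{1,\ldots,2^n-u\}$ there are at least $2^n/4$ positions where the $i$-th and $(i+u)$-th bits of $a_n$ coincide and at least $2^n/4$ positions where they differ. *)

From mathcomp Require Import all_boot.
Set Implicit Arguments. Unset Strict Implicit. Unset Printing Implicit Defensive.

(* Thue–Morse-type words: (a_n, b_n) with a_0 = 0, b_0 = 1,
   a_{n+1} = a_n b_n, b_{n+1} = b_n a_n. Bits encoded as bool (0 = false). *)
Fixpoint ab (n : nat) : seq bool * seq bool :=
  match n with
  | 0 => ([:: false], [:: true])
  | n'.+1 => let: (a, b) := ab n' in (a ++ b, b ++ a)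
  end.

Definition a_word (n : nat) : seq bool := (ab n).1.
Definition b_word (n : nat) : seq bool := (ab n).2.

(* The i-th bit (1-indexed, as in the paper) of a word w. *)
Definition bit (w : seq bool) (i : nat) : bool := nth false w i.-1.

From mathcomp Require Import all_boot zify.

(* Every a_n is a prefix of a_{n+1}, so all the a_n are prefixes of one
   infinite word, the Thue-Morse sequence tm, and b_n is the bitwise
   complement of a_n.  From a_{n+1} = a_n (complement of a_n) we derive the
   classical recurrences tm (2k) = tm k and tm (2k+1) = ~~ tm k.
   For a shift u and a bit b let C n u b count the j < 2^n - u with
   tm j (+) tm (j + u) = b (b = false: agreements, b = true: differences).
   The recurrences give
     C (n+1) (2v)   b = 2 C n v b,
     C (n+1) (2v+1) b = C n v (~~ b) + C n (v+1) (~~ b),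
   and an induction on n along these identities (the shift u = 1 being the
   base case) yields 2^n <= 4 C n u b whenever 0 < u and 4u <= 2^n. *)

Lemma a_wordS n : a_word n.+1 = a_word n ++ b_word n.
Proof. by rewrite /a_word /b_word /=; case: (ab n). Qed.

Lemma b_wordS n : b_word n.+1 = b_word n ++ a_word n.
Proof. by rewrite /a_word /b_word /=; case: (ab n). Qed.

Lemma b_wordE n : b_word n = map negb (a_word n).
Proof.
elim: n => [//|n IH]; rewrite a_wordS b_wordS map_cat IH -map_comp.
by rewrite (@eq_map _ _ (negb \o negb) id) ?map_id // => x /=; rewrite negbK.
Qed.

Lemma size_a_word n : size (a_word n) = 2 ^ n.
Proof.
elim: n => [//|n IH].
by rewrite a_wordS size_cat b_wordE size_map IH expnS mul2n addnn.
Qed.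

Lemma nth_a_word_mono n m k : n <= m -> k < 2 ^ n ->
  nth false (a_word m) k = nth false (a_word n) k.
Proof.
move=> le_nm lt_k; elim: m le_nm => [|m IH]; first by rewrite leqn0 => /eqP ->.
rewrite leq_eqVlt => /orP [/eqP -> //| lt_nm].
rewrite a_wordS nth_cat size_a_word (leq_trans lt_k (leq_pexp2l _ _)) //.
exact: IH.
Qed.

(* The Thue-Morse sequence: the common extension of all the a_n
   (the index k lies in a_{k+1} since k < 2^(k+1)). *)
Definition tm (k : nat) : bool := nth false (a_word k.+1) k.

Lemma nth_a_word n k : k < 2 ^ n -> nth false (a_word n) k = tm k.
Proof.
move=> lt_k; rewrite /tm -(@nth_a_word_mono n (maxn n k.+1)) ?leq_maxl //.
rewrite (@nth_a_word_mono k.+1 (maxn n k.+1)) ?leq_maxr //.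
exact: ltnW (ltn_expl k.+1 (ltnSn 1)).
Qed.

Lemma tm_high n m : m < 2 ^ n -> tm (2 ^ n + m) = ~~ tm m.
Proof.
move=> lt_m; rewrite -(@nth_a_word n.+1); last by rewrite expnS mul2n -addnn ltn_add2l.
rewrite a_wordS nth_cat size_a_word ltnNge leq_addr /= addKn b_wordE.
by rewrite (nth_map false) ?size_a_word // nth_a_word.
Qed.

(* The doubling recurrences, for k in the prefix of length 2^n; induction on
   n, a k in the second half being reduced to k - 2^n by tm_high. *)
Lemma tm_double_below n k : k < 2 ^ n -> tm k.*2 = tm k /\ tm k.*2.+1 = ~~ tm k.
Proof.
elim: n k => [|n IH] k lt_k; first by move: lt_k; rewrite expn0 ltnS leqn0 => /eqP ->.
have [/IH //|ge_k] := ltnP k (2 ^ n).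
set m := k - 2 ^ n.
have lt_m : m < 2 ^ n by rewrite ltn_subLR // addnn -mul2n -expnS.
have lt_m2 : m.*2.+1 < 2 ^ n.+1 by rewrite expnS mul2n ltn_Sdouble.
have k_high : k = 2 ^ n + m by rewrite subnKC.
have k2_high : k.*2 = 2 ^ n.+1 + m.*2 by rewrite k_high doubleD expnS mul2n.
have [tm_m2 tm_m2S] := IH _ lt_m.
rewrite k2_high -addnS !tm_high ?(ltn_trans (ltnSn _) lt_m2) // tm_m2 tm_m2S.
by rewrite k_high tm_high // negbK.
Qed.

Lemma tm_double k : tm k.*2 = tm k.
Proof. by have [] := @tm_double_below k k (ltn_expl k (ltnSn 1)). Qed.

Lemma tm_doubleS k : tm k.*2.+1 = ~~ tm k.
Proof. by have [] := @tm_double_below k k (ltn_expl k (ltnSn 1)). Qed.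

Definition C (n u : nat) (b : bool) : nat :=
  \sum_(j < 2 ^ n - u) (tm j (+) tm (j + u) == b).

Lemma sum_even_odd K (f : nat -> nat) :
  \sum_(j < K.*2) f j = \sum_(j < K) (f j.*2 + f j.*2.+1).
Proof.
elim: K => [|K IH]; first by rewrite !big_ord0.
by rewrite doubleS !big_ord_recr /= IH addnA.
Qed.

Lemma C_shift0 n b : C n 0 b = if b then 0 else 2 ^ n.
Proof.
rewrite /C subn0; under eq_bigr do rewrite addn0 addbb.
by case: b => /=; [rewrite big1 | rewrite sum1_card card_ord].
Qed.

(* Even shifts: both parities of j contribute C n v b. *)
Lemma C_even n v b : v <= 2 ^ n -> C n.+1 v.*2 b = 2 * C n v b.
Proof.
move=> le_v; rewrite /C expnS mul2n -doubleB.
rewrite (sum_even_odd _ (fun j => tm j (+) tm (j + v.*2) == b)).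
rewrite [RHS]mul2n -[RHS]addnn -big_split /=; apply: eq_bigr => j _.
by rewrite -doubleD addSn -doubleD !tm_double !tm_doubleS addbN addNb negbK.
Qed.

(* Odd shifts: even j see the shift v, odd j the shift v + 1, with
   agreements and differences exchanged. *)
Lemma C_odd n v b : v < 2 ^ n ->
  C n.+1 v.*2.+1 b = C n v (~~ b) + C n v.+1 (~~ b).
Proof.
move=> lt_v; set K := 2 ^ n - v.+1.
have len_odd : 2 ^ n.+1 - v.*2.+1 = K.*2.+1.
  rewrite /K expnS mul2n -(subnKC lt_v) addKn doubleD !doubleS.
  by rewrite addSn subSn ?leq_addr // addKn.
have len_v : 2 ^ n - v = K.+1 by rewrite subnSK.
rewrite /C len_odd len_v big_ord_recr /=.
rewrite (sum_even_odd _ (fun j => tm j (+) tm (j + v.*2.+1) == b)).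
rewrite big_ord_recr /= [RHS]addnAC -big_split /=; congr (_ + _).
  apply: eq_bigr => j _.
  rewrite addnS -doubleD addSn addnS -doubleD -doubleS -addnS.
  rewrite !tm_double !tm_doubleS.
  by case: (tm j); case: (tm (j + v)); case: (tm (j + v.+1)); case: b.
rewrite addnS -doubleD tm_double tm_doubleS.
by case: (tm K); case: (tm (K + v)); case: b.
Qed.

(* The shift u = 1, the base case of the main estimate: by C_odd with v = 0,
   C (m+1) 1 b = C m 0 (~~ b) + C m 1 (~~ b). *)
Lemma C_one_true m : 2 ^ m <= C m.+1 1 true.
Proof. by rewrite (@C_odd _ 0) ?expn_gt0 // C_shift0 leq_addr. Qed.

Lemma C_one_false k : 2 ^ k <= C k.+2 1 false.
Proof. by rewrite (@C_odd _ 0) ?expn_gt0 // C_shift0 add0n C_one_true. Qed.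

Lemma C_one n b : 4 <= 2 ^ n -> 2 ^ n <= 4 * C n 1 b.
Proof.
case: n => [|[|k]] // _; case: b.
  by apply: leq_trans (leq_mul (leqnn 4) (C_one_true k.+1)); rewrite !expnS; lia.
by apply: leq_trans (leq_mul (leqnn 4) (C_one_false k)); rewrite !expnS; lia.
Qed.

Lemma C_lower n u b : 0 < u -> 4 * u <= 2 ^ n -> 2 ^ n <= 4 * C n u b.
Proof.
elim: n u b => [|m IH] u b; first by rewrite expn0; lia.
have [[v ->]|[v ->]] : (exists v, u = v.*2) \/ (exists v, u = v.*2.+1).
  by rewrite -(odd_double_half u); case: (odd u); [right|left]; exists u./2.
- move=> u_gt0 le_u; rewrite C_even; last by rewrite expnS in le_u; lia.
  by rewrite expnS mulnCA leq_mul2l IH ?orbT //; rewrite expnS in le_u; lia.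
- move=> _ le_u; have [->|v_gt0] := posnP v; first by apply: C_one; lia.
  (* 4 divides 2^m, so 4 (2v + 1) <= 2^(m+1) improves to 4 (v + 1) <= 2^m. *)
  have le_v1 : 4 * v.+1 <= 2 ^ m.
    by move: le_u; case: (m) => [|[|k]]; rewrite ?expnS; lia.
  rewrite C_odd; last by lia.
  by rewrite expnS mulnDr mul2n -addnn leq_add // IH //; lia.
Qed.

(* The positions 1 <= i <= N - u, read off from the index j = i - 1. *)
Lemma card_positions N u (Q : nat -> bool) : u <= N ->
  #|[set i : 'I_N.+1 | (1 <= i <= N - u) && Q i]| = \sum_(j < N - u) Q j.+1.
Proof.
move=> le_u; rewrite cardsE -sum1_card big_mkcond big_ord_recl /=.
rewrite (big_ord_widen N (fun j => nat_of_bool (Q j.+1))) ?leq_subr //.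
rewrite add0n [RHS]big_mkcond; apply: eq_bigr => i _; rewrite unfold_in /=.
by rewrite /bump leq0n add1n; case: (i < N - u); case: (Q _).
Qed.

(* Comparing the bits i and i + u of a_n is comparing tm (i-1) and tm (i-1+u). *)
Lemma sum_bits_C n u b : u <= 2 ^ n ->
  \sum_(j < 2 ^ n - u) ((bit (a_word n) j.+1 == bit (a_word n) (j.+1 + u)) == b)
  = C n u (~~ b).
Proof.
move=> le_u; apply: eq_bigr => j _.
have lt_ju : j + u < 2 ^ n by rewrite addnC -ltn_subRL.
rewrite /bit addSn /= !nth_a_word ?(leq_ltn_trans (leq_addr u j)) //.
by case: (tm j); case: (tm (j + u)); case: b.
Qed.

Theorem mainTheorem4 (u n : nat) :
  0 < u -> u <= size (a_word n) %/ 4 ->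
  2 ^ n <= 4 * #|[set i : 'I_(2 ^ n).+1 | (1 <= i <= 2 ^ n - u) &&
                    (bit (a_word n) i == bit (a_word n) (i + u))]| /\
  2 ^ n <= 4 * #|[set i : 'I_(2 ^ n).+1 | (1 <= i <= 2 ^ n - u) &&
                    (bit (a_word n) i != bit (a_word n) (i + u))]|.
Proof.
move=> u_gt0; rewrite size_a_word leq_divRL // mulnC => le_u.
have le_un : u <= 2 ^ n by lia.
set agree := fun i => bit (a_word n) i == bit (a_word n) (i + u).
rewrite (card_positions _ _ agree) // (card_positions _ _ (fun i => ~~ agree i)) // {}/agree.
split.
- have := @C_lower n u false u_gt0 le_u; rewrite -(@sum_bits_C n u true) //.
  by under [X in _ <= 4 * X -> _]eq_bigr do rewrite eqb_id.
- have := @C_lower n u true u_gt0 le_u; rewrite -(@sum_bits_C n u false) //.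
  by under [X in _ <= 4 * X -> _]eq_bigr do rewrite eqbF_neg.
Qed.
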